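(* Let $m\ge2$ and let $K_m$ have Laplacian $L$. Let $\{a_1,b_1\},\dots,\{a_r,b_r\}$ be pairwise vertex-disjoint edges of $K_m$, and let $\tilde L=L-\tfrac34\sum_{j=1}^r(\mathbf e_{a_j}-\mathbf e_{b_j})(\mathbf e_{a_j}-\mathbf e_{b_j})^T$ be the Laplacian of the weighted graph obtained from $K_m$ by setting the weight of each of these edges to $\tfrac14$. Then $\tilde L$ exhibits perfect state transfer at time $2\pi$ between $a_j$ and $b_j$ for every $j=1,\dots,r$.
   Context: $L=D-A$ is the Laplacian; $\mathbf e_u$ is the standard basis vector of vertex $u$. For a real symmetric $H$, $U_H(t)=\exp(-itH)$, and $H$ exhibits perfect state transfer between distinct $u,v$ at time $\tau$ if $U_H(\tau)\mathbf e_u=\gamma\mathbf e_v$ for some $\gamma\in\mathbb C$. *)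

From HB Require Import structures.
From mathcomp Require Import all_boot all_order all_algebra.
From mathcomp Require Import all_classical all_reals all_analysis.
From mathcomp Require Import complex.

Set Implicit Arguments.
Unset Strict Implicit.
Unset Printing Implicit Defensive.

Import Order.TTheory GRing.Theory Num.Theory.
Import numFieldNormedType.Exports.
Local Open Scope ring_scope.
Local Open Scope complex_scope.

Definition evec (K : nzRingType) (n : nat) (u : 'I_n) : 'cV[K]_n :=
  delta_mx u ord0.

Definition adj_complete (R : nzRingType) (m : nat) : 'M[R]_m :=
  \matrix_(i, j) (i != j)%:R.

Definition laplacian (R : nzRingType) (m : nat) (A : 'M[R]_m) : 'M[R]_m :=
  \matrix_(i, j) ((i == j)%:R * (\sum_k A i k)) - A.

Definition cmx (R : rcfType) (n : nat) (H : 'M[R]_n) : 'M[R[i]]_n :=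
  map_mx (fun x => x%:C) H.

(* U_H(t) = exp(-i t H), defined by its (everywhere convergent) power series
   sum_k (-i t)^k / k! * H^k in the normed space of complex n x n matrices. *)
Definition U_H (R : realType) (n : nat) (H : 'M[R]_n) (t : R) : 'M[R[i]]_n :=
  limn (fun N : nat =>
    \sum_(0 <= k < N) ((((- 'i) * t%:C) ^+ k / (k`!)%:R) *: (cmx H) ^+ k)).

Definition PST (R : realType) (n : nat) (H : 'M[R]_n) (u v : 'I_n) (tau : R) : Prop :=
  u != v /\ exists gamma : R[i], U_H H tau *m evec _ u = gamma *: evec _ v.

(** The weighted Laplacian is [m I - J - (3/4) Q] with [J] the all-ones matrix and
    [Q = sum_j d_j d_j^T], [d_j = e_(a j) - e_(b j)].  Because the edges are disjoint,
    the [d_j] are orthogonal of squared norm 2, so [J/m], [Q/2] and [I - J/m - Q/2] are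
    complementary orthogonal projectors with eigenvalues [0], [m - 3/2] and [m].  At time
    [2 pi] the phases are [1], [-1], [1], hence [U(2 pi) = I - Q], which maps
    [e_(a j)] to [e_(a j) - d_j = e_(b j)]. *)
From HB Require Import structures.
From mathcomp Require Import all_boot all_order all_algebra.
From mathcomp Require Import all_classical all_reals all_analysis.
From mathcomp Require Import complex.
From mathcomp Require Import ring.

Import Order.TTheory GRing.Theory Num.Theory.
Import numFieldTopology.Exports numFieldNormedType.Exports.
Local Open Scope ring_scope.

Set Implicit Arguments.
Unset Strict Implicit.
Unset Printing Implicit Defensive.

Lemma laplacian_complete (F : nzRingType) (m : nat) :
  laplacian (adj_complete F m) = (m%:R)%:M - const_mx 1.
Proof.
apply/matrixP => i j; rewrite !mxE.
have -> : \sum_k adj_complete F m i k = (m.-1)%:R.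
  rewrite (bigD1 i) //= !mxE eqxx add0r (eq_bigr (fun _ => 1)).
    by rewrite sumr_const cardC1 card_ord.
  by move=> k /negbTE; rewrite !mxE eq_sym => ->.
case: (i == j) => /=; last by rewrite mul0r mulr0n sub0r.
rewrite mul1r mulr1n subr0 -(natrB _ (_ : 1 <= m)%N) ?subn1 //.
by case: m i {j} => [[]|].
Qed.

Section Matching.
Variables (F : numFieldType) (m r : nat) (a b : 'I_r -> 'I_m).

Local Notation J := (const_mx 1 : 'M[F]_m).

Definition edge_vec (j : 'I_r) : 'cV[F]_m := evec F (a j) - evec F (b j).

Definition matching_mx : 'M[F]_m := \sum_(j < r) (edge_vec j *m (edge_vec j)^T).

Lemma tr_evec_mul (u v : 'I_m) : (evec F u)^T *m evec F v = (u == v)%:R%:M.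
Proof.
rewrite /evec trmx_delta mul_delta_mx_cond.
by apply/matrixP => i j; rewrite !ord1; case: (u == v); rewrite ?mulr1n ?mulr0n !mxE.
Qed.

Lemma tr_edge_vec_evec j (u : 'I_m) :
  (edge_vec j)^T *m evec F u = ((a j == u)%:R - (b j == u)%:R)%:M.
Proof. by rewrite /edge_vec raddfB mulmxBl !tr_evec_mul raddfB. Qed.

Lemma const_mx_mul_evec (u : 'I_m) : J *m evec F u = const_mx 1.
Proof. by rewrite /evec -colE; apply/matrixP => x y; rewrite !mxE. Qed.

Lemma const_mx_mul_edge_vec j : J *m edge_vec j = 0.
Proof. by rewrite mulmxBr !const_mx_mul_evec subrr. Qed.

Lemma const_mx_sqr : J *m J = m%:R *: J.
Proof.
apply/matrixP => x y; rewrite !mxE (eq_bigr (fun _ => 1)) => [|k _].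
  by rewrite sumr_const card_ord mulr1.
by rewrite !mxE mulr1.
Qed.

Lemma const_mx_mul_matching : J *m matching_mx = 0.
Proof.
by rewrite mulmx_sumr big1 // => k _; rewrite mulmxA const_mx_mul_edge_vec mul0mx.
Qed.

Lemma matching_mul_const_mx : matching_mx *m J = 0.
Proof.
rewrite mulmx_suml big1 // => k _.
by rewrite -mulmxA -[J]trmx_const -trmx_mul const_mx_mul_edge_vec trmx0 mulmx0.
Qed.

Hypothesis edge_neq : forall j, a j != b j.
Hypothesis edges_disjoint : forall j k, j != k ->
  [/\ a j != a k, a j != b k, b j != a k & b j != b k].

Lemma tr_edge_vec_mul j k : (edge_vec j)^T *m edge_vec k = ((j == k)%:R *+ 2)%:M.
Proof.
rewrite [edge_vec k]/edge_vec mulmxBr !tr_edge_vec_evec.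
case: (eqVneq j k) => [<-|njk].
  rewrite !eqxx eq_sym (negbTE (edge_neq j)).
  by apply/matrixP => x y; rewrite !ord1 !mxE /= !mulr1n subr0 sub0r opprK.
have [h1 h2 h3 h4] := edges_disjoint njk.
rewrite (negbTE h1) (negbTE h2) (negbTE h3) (negbTE h4).
by rewrite subrr /= mulr0n mul0rn raddf0.
Qed.

Lemma matching_mx_sqr : matching_mx *m matching_mx = 2%:R *: matching_mx.
Proof.
rewrite {1}/matching_mx mulmx_suml scaler_sumr; apply: eq_bigr => j _.
rewrite mulmx_sumr (bigD1 j) //= big1 ?addr0 => [|k njk].
  by rewrite !mulmxA -(mulmxA _ _ (edge_vec j)) tr_edge_vec_mul eqxx
             mul_mx_scalar -scalemxAl.
by rewrite -mulmxA (mulmxA _ (edge_vec k)) tr_edge_vec_mul eq_sym (negbTE njk)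
           mul0rn mul_scalar_mx scale0r mulmx0.
Qed.

Lemma matching_mul_evec_a j : matching_mx *m evec F (a j) = edge_vec j.
Proof.
rewrite mulmx_suml (bigD1 j) //= big1 ?addr0 => [|k njk].
  by rewrite -mulmxA tr_edge_vec_evec eqxx eq_sym (negbTE (edge_neq j)) subr0 mulmx1.
have [h1 _ h3 _] := edges_disjoint njk.
by rewrite -mulmxA tr_edge_vec_evec (negbTE h1) (negbTE h3)
           subrr mul_mx_scalar scale0r.
Qed.

Hypothesis m_neq0 : (m%:R : F) != 0.

Definition const_proj : 'M[F]_m := (m%:R)^-1 *: J.
Definition matching_proj : 'M[F]_m := 2^-1 *: matching_mx.

Lemma const_proj_idem : const_proj *m const_proj = const_proj.
Proof. by rewrite -scalemxAl -scalemxAr const_mx_sqr !scalerA divfK. Qed.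

Lemma matching_proj_idem : matching_proj *m matching_proj = matching_proj.
Proof.
by rewrite -scalemxAl -scalemxAr matching_mx_sqr !scalerA divfK ?pnatr_eq0.
Qed.

Lemma const_matching_proj : const_proj *m matching_proj = 0.
Proof. by rewrite -scalemxAl -scalemxAr const_mx_mul_matching !scaler0. Qed.

Lemma matching_const_proj : matching_proj *m const_proj = 0.
Proof. by rewrite -scalemxAl -scalemxAr matching_mul_const_mx !scaler0. Qed.

Lemma perturbed_laplacian_spectral :
  (m%:R)%:M - J - (3 / 4) *: matching_mx =
  0 *: const_proj + (m%:R - 3 / 2) *: matching_proj
    + m%:R *: (1%:M - const_proj - matching_proj).
Proof.
by apply/matrixP => i k; rewrite !mxE -mulr_natr; field.
Qed.

End Matching.

Lemma expr_spectral (F : fieldType) (n : nat) (P Q : 'M[F]_n) (x y z : F) k :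
  P *m P = P -> Q *m Q = Q -> P *m Q = 0 -> Q *m P = 0 ->
  (x *: P + y *: Q + z *: (1%:M - P - Q)) ^+ k =
  x ^+ k *: P + y ^+ k *: Q + z ^+ k *: (1%:M - P - Q).
Proof.
move=> PP QQ PQ QP; set S := 1%:M - P - Q.
have PS : P *m S = 0 by rewrite !mulmxBr mulmx1 PP PQ subrr subr0.
have SP : S *m P = 0 by rewrite !mulmxBl mul1mx PP QP subrr subr0.
have QS : Q *m S = 0 by rewrite !mulmxBr mulmx1 QQ QP subr0 subrr.
have SQ : S *m Q = 0 by rewrite !mulmxBl mul1mx QQ PQ subr0 subrr.
have SS : S *m S = S by rewrite {1}/S !mulmxBl mul1mx PS QS !subr0.
elim: k => [|k IH].
  by rewrite !expr0 !scale1r /S -[1%:M - P - Q]addrA -opprD addrC addNKr.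
rewrite exprSr IH -mulmxE !mulmxDl !mulmxDr -!scalemxAl -!scalemxAr !scalerA.
by rewrite PP QQ PQ QP PS SP QS SQ SS !scaler0 !addr0 !add0r -!exprSr.
Qed.

Section ExpSeries.
Local Open Scope complex_scope.
Local Open Scope classical_set_scope.
Variable R : realType.
(* [R[i]] seen as a normed field, so that limits below use the modulus topology. *)
Local Notation C := (Num.NumField.sort (R[i] : numFieldType)).

Definition expNi (y : R) : R[i] := (cos y)%:C - 'i * (sin y)%:C.

Lemma exp_series_coef (y : R) k : (- 'i) ^+ k * (y%:C) ^+ k / (k`!)%:R =
  (cos_coeff y k)%:C - 'i * (sin_coeff y k)%:C :> R[i].
Proof.
have exprNi (c : bool) (q : nat) : (- 'i) ^+ (c + q.*2) =
    ((~~ odd (c + q.*2))%:R * (-1) ^+ (c + q.*2)./2 : R)%:C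
    - 'i * ((odd (c + q.*2))%:R * (-1) ^+ (c + q.*2).-1./2 : R)%:C :> R[i].
  rewrite half_bit_double oddD odd_double oddb addbF exprD -mul2n exprM sqrrN sqr_i.
  case: c => /=; last first.
    by rewrite expr0 !mul1r mul0r rmorph0 mulr0 subr0 rmorphXn rmorphN rmorph1.
  by rewrite add0n mul2n doubleK mul0r mul1r rmorph0 sub0r expr1 rmorphXn rmorphN
             rmorph1 mulNr.
rewrite -{1}(odd_double_half k) exprNi odd_double_half /cos_coeff /sin_coeff /=.
rewrite !(rmorphM, fmorphV, rmorphXn, rmorph_nat) /=.
ring.
Qed.

Lemma cvg_complex_of_real (u : nat -> R) (l : R) : u @ \oo --> l ->
  (fun n => (u n)%:C : C) @ \oo --> (l%:C : C).
Proof.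
move=> /cvgrPdist_lt ul; apply/cvgrPdist_lt => e e0.
move: (e0); rewrite ltcE /= => /andP[/eqP Ie Re0].
apply: filterS (ul _ Re0) => n hn.
by rewrite -rmorphB normc_def /= expr0n /= addr0 sqrtr_sqr ltcE /= -Ie eqxx.
Qed.

Lemma cvg_expNi_series (y : R) :
  (fun N => \sum_(0 <= k < N) ((- 'i) ^+ k * (y%:C) ^+ k / (k`!)%:R)) @ \oo -->
  (expNi y : C).
Proof.
have -> : (fun N => \sum_(0 <= k < N) ((- 'i) ^+ k * (y%:C) ^+ k / (k`!)%:R)) =
  (fun N => (series (cos_coeff y) N)%:C - 'i * (series (sin_coeff y) N)%:C).
  apply/funext => N; rewrite /series /= !rmorph_sum /= mulr_sumr -sumrB.
  by apply: eq_bigr => k _; rewrite exp_series_coef.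
have cos_cvg : series (cos_coeff y) @ \oo --> cos y.
  by rewrite cos.unlock; exact: is_cvg_series_cos_coeff.
have sin_cvg : series (sin_coeff y) @ \oo --> sin y.
  by rewrite sin.unlock; exact: is_cvg_series_sin_coeff.
have isin := cvgMl_tmp (a := 'i) (cvg_complex_of_real sin_cvg).
exact: cvgB (cvg_complex_of_real cos_cvg) (isin _).
Qed.

Lemma U_H_spectral (n : nat) (H : 'M[R]_n) (P Q : 'M[R[i]]_n) (x y z t : R) :
  P *m P = P -> Q *m Q = Q -> P *m Q = 0 -> Q *m P = 0 ->
  cmx H = x%:C *: P + y%:C *: Q + z%:C *: (1%:M - P - Q) ->
  U_H H t = expNi (t * x) *: P + expNi (t * y) *: Q
            + expNi (t * z) *: (1%:M - P - Q).
Proof.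
move=> PP QQ PQ QP defH.
pose S (w : R) N := \sum_(0 <= k < N) ((- 'i) ^+ k * ((t * w)%:C) ^+ k / (k`!)%:R).
have coef (w : R) k : ((- 'i * t%:C) ^+ k / (k`!)%:R) * (w%:C) ^+ k
    = (- 'i) ^+ k * ((t * w)%:C) ^+ k / (k`!)%:R.
  by rewrite !rmorphM !exprMn; ring.
rewrite /U_H; set f := (X in lim (X @ \oo)%classic).
have -> : f = fun N => S x N *: P + S y N *: Q + S z N *: (1%:M - P - Q).
  apply/funext => N; rewrite /f /S !scaler_suml -!big_split /=.
  apply: eq_bigr => k _.
  by rewrite defH expr_spectral // !scalerDr !scalerA !coef.
have cvgS (w : R) (M : 'M[R[i]]_n) :=
  cvgZr_tmp (FF := eventually_filter) (a := M) (cvg_expNi_series (y := t * w)).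
by rewrite (cvg_lim (@norm_hausdorff _ _) (cvgD (cvgD (cvgS x P) (cvgS y Q)) (cvgS z _))).
Qed.

Lemma expNi_2pi_nat (k : nat) : expNi (2 * pi * k%:R) = 1.
Proof.
rewrite /expNi.
suff [-> ->] : cos (2 * pi * k%:R) = 1 :> R /\ sin (2 * pi * k%:R) = 0 :> R.
  by rewrite rmorph0 mulr0 subr0.
elim: k => [|k [ck sk]]; first by rewrite mulr0 cos0 sin0.
have -> : 2 * pi * k.+1%:R = 2 * pi * k%:R + pi *+ 2 :> R.
  by rewrite -natr1 -mulr_natl; ring.
by rewrite cosD2pi sinD2pi.
Qed.

Lemma expNi0 : expNi 0 = 1.
Proof. by rewrite /expNi cos0 sin0 rmorph0 mulr0 subr0. Qed.

Lemma expNiDpi (y : R) : expNi (y + pi) = - expNi y.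
Proof. by rewrite /expNi cosDpi sinDpi !rmorphN mulrN opprB opprK addrC. Qed.

End ExpSeries.

Lemma cmx_matching_laplacian (R : rcfType) (m r : nat) (a b : 'I_r -> 'I_m) :
  cmx (laplacian (adj_complete R m) - (3 / 4) *: matching_mx R a b) =
  (m%:R)%:M - const_mx 1 - (3 / 4) *: matching_mx R[i] a b.
Proof.
rewrite /cmx laplacian_complete !map_mxB map_mxZ; congr (_ - _ - _ *: _).
- by rewrite map_scalar_mx rmorph_nat.
- by rewrite map_const_mx.
- by rewrite fmorph_div !rmorph_nat.
rewrite map_mx_sum; apply: eq_bigr => k _.
by rewrite map_mxM -map_trmx /edge_vec map_mxB /evec !map_delta_mx.
Qed.

Theorem mainTheorem7 (R : realType) (m : nat) (hm : (2 <= m)%N)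
    (r : nat) (a b : 'I_r -> 'I_m)
    (hedge : forall j, a j != b j)
    (hdisj : forall j k, j != k ->
       [/\ a j != a k, a j != b k, b j != a k & b j != b k]) :
  let L : 'M[R]_m := laplacian (adj_complete R m) in
  let Lt : 'M[R]_m :=
    L - (3 / 4) *: \sum_(j < r)
          ((evec R (a j) - evec R (b j)) *m (evec R (a j) - evec R (b j))^T) in
  forall j : 'I_r, PST Lt (a j) (b j) (2 * pi).
Proof.
move=> L Lt j; split=> //; exists 1.
have m_neq0 : (m%:R : R[i]) != 0 by rewrite pnatr_eq0 -lt0n (leq_trans _ hm).
set P0 := const_proj R[i] m; set P1 := matching_proj R[i] a b.
have defLt : cmx Lt = (0 : R)%:C%C *: P0 + (m%:R - 3 / 2 : R)%:C%C *: P1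
                      + (m%:R : R)%:C%C *: (1%:M - P0 - P1).
  by rewrite cmx_matching_laplacian perturbed_laplacian_spectral // rmorph0 rmorphB
             fmorph_div !rmorph_nat.
rewrite (U_H_spectral _ (const_proj_idem m_neq0) (matching_proj_idem _ hedge hdisj)
           (const_matching_proj _ _ _) (matching_const_proj _ _ _) defLt).
have -> : 2 * pi * (m%:R - 3 / 2) = 2 * pi * (m - 2)%:R + pi :> R.
  by rewrite natrB //; field.
rewrite mulr0 expNi0 expNiDpi !expNi_2pi_nat scaleN1r !scale1r.
have -> : P0 - P1 + (1%:M - P0 - P1) = 1%:M - matching_mx R[i] a b.
  by apply/matrixP => x y; rewrite !mxE; field.
by rewrite mulmxBl mul1mx matching_mul_evec_a // /edge_vec opprB addrC subrK.
Qed.
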